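(* Let $\mathcal I,\mathcal J,\mathcal K$ be ideals on $\omega$ and let $X$ be a nonempty topological space. (1) Each of the following implies the next: (a) $|X|<\mathfrak b_s(\mathcal J,\mathcal J,\mathcal I)$; (b) for every sequence $(f_n)$ in $\mathcal C(X)$, $\mathcal I$-pointwise convergence to $0$ implies $\mathcal J$-quasi-normal convergence to $0$; (c) $\mathcal I\subseteq\mathcal J$. (2) Each of the following implies the next: (a) $|X|<\mathrm{add}_\omega(\mathcal J,\mathcal K)$; (b) for every $(f_n)$ in $\mathcal C(X)$, $\mathcal J$-quasi-normal convergence to $0$ implies $\mathcal K$-$\sigma$-uniform convergence to $0$; (c) $\mathcal J\subseteq\mathcal K$. (3) Each of the following implies the next: (a) $|X|<\mathfrak b_\sigma(\mathcal I,\mathcal K)$; (b) for every $(f_n)$ in $\mathcal C(X)$, $\mathcal I$-pointwise convergence to $0$ implies $\mathcal K$-$\sigma$-uniform convergence to $0$; (c) $\mathcal I\subseteq\mathcal K$.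
   Context: An ideal on $\omega$ is a family $\mathcal I\subseteq\mathcal P(\omega)$ closed under finite unions and subsets, containing all finite sets, with $\omega\notin\mathcal I$. A real sequence $(a_n)$ is $\mathcal I$-convergent to $0$ if $\{n:|a_n|\ge\varepsilon\}\in\mathcal I$ for all $\varepsilon>0$. For a sequence $(f_n)$ of real functions on a set $X$: $\mathcal I$-pointwise convergence to $0$ means $(f_n(x))$ is $\mathcal I$-convergent to $0$ for each $x$; $\mathcal I$-uniform means $\{n:\exists x\in X\,(|f_n(x)|\ge\varepsilon)\}\in\mathcal I$ for each $\varepsilon>0$; $\mathcal I$-$\sigma$-uniform means $X=\bigcup_{k\in\omega}X_k$ with $(f_n\restriction X_k)$ $\mathcal I$-uniformly convergent to $0$ for each $k$; $\mathcal I$-quasi-normal means there is a sequence $(\varepsilon_n)$ of positive reals $\mathcal I$-convergent to $0$ with $\{n:|f_n(x)|\ge\varepsilon_n\}\in\mathcal I$ for each $x$. $\mathcal C(X)$ = continuous real functions on $X$. Cardinals (convention $\min\emptyset=\infty$, and $\kappa<\infty$ for every cardinal $\kappa$): $\widehat{\mathcal P}_{\mathcal I}$ = sequences $(A_n)\in\mathcal I^\omega$ of pairwise disjoint sets; $\mathcal P_{\mathcal I}$ = those with $\bigcup_nA_n=\omega$; $\mathcal M_{\mathcal I}$ = sequences $(E_k)\in\mathcal I^\omega$ with $E_k\subseteq E_{k+1}$. $\mathfrak b_s(\mathcal I,\mathcal J,\mathcal K)=\min\{|\mathcal E|:\mathcal E\subseteq\widehat{\mathcal P}_{\mathcal K}$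 and for every $(A_n)\in\mathcal P_{\mathcal J}$ there is $(E_n)\in\mathcal E$ with $\bigcup_n(A_{n+1}\cap\bigcup_{i\le n}E_i)\notin\mathcal I\}$; $\mathfrak b_\sigma(\mathcal I,\mathcal J)=\min\{|\mathcal E|:\mathcal E\subseteq\mathcal M_{\mathcal I}$ and for every $(A_n)\in\mathcal M_{\mathcal J}$ there is $(E_n)\in\mathcal E$ with $E_n\not\subseteq A_n$ for infinitely many $n\}$; $\mathrm{add}_\omega(\mathcal I,\mathcal J)=\min\{|\mathcal A|:\mathcal A\subseteq\mathcal I$ and for every $(B_n)\in\mathcal J^\omega$ there is $A\in\mathcal A$ with $A\not\subseteq B_n$ for all $n\}$. *)

From mathcomp Require Import all_boot all_order all_algebra.
From mathcomp Require Import all_classical all_reals topology normedtype.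
Import numFieldNormedType.Exports.
Set Implicit Arguments. Unset Strict Implicit. Unset Printing Implicit Defensive.
Import Order.TTheory GRing.Theory Num.Theory.
Local Open Scope classical_set_scope.
Local Open Scope ring_scope.

Definition is_ideal (I : set (set nat)) : Prop :=
  [/\ (forall A B, I A -> I B -> I (A `|` B)),
      (forall A B, B `<=` A -> I A -> I B),
      (forall A, finite_set A -> I A) &
      ~ I setT].

Definition Iconv0 (R : realType) (I : set (set nat)) (a : nat -> R) : Prop :=
  forall eps : R, 0 < eps -> I [set n | eps <= `|a n|].

Definition Ipointwise (R : realType) (X : Type) (I : set (set nat))
  (f : nat -> X -> R) : Prop := forall x, Iconv0 I (fun n => f n x).

Definition Iuniform_on (R : realType) (X : Type) (I : set (set nat))
  (f : nat -> X -> R) (Y : set X) : Prop :=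
  forall eps : R, 0 < eps -> I [set n | exists x, Y x /\ eps <= `|f n x|].

Definition Isigma_uniform (R : realType) (X : Type) (I : set (set nat))
  (f : nat -> X -> R) : Prop :=
  exists Xk : nat -> set X, \bigcup_k Xk k = setT /\ forall k, Iuniform_on I f (Xk k).

Definition Iquasi_normal (R : realType) (X : Type) (I : set (set nat))
  (f : nat -> X -> R) : Prop :=
  exists e : nat -> R, [/\ (forall n, 0 < e n), Iconv0 I e &
     forall x, I [set n | e n <= `|f n x|]].

Definition Phat (K : set (set nat)) (A : nat -> set nat) : Prop :=
  (forall n, K (A n)) /\ (forall n m, n <> m -> A n `&` A m = set0).

Definition Ppart (J : set (set nat)) (A : nat -> set nat) : Prop :=
  Phat J A /\ \bigcup_n A n = setT.

Definition Mseq (I : set (set nat)) (E : nat -> set nat) : Prop :=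
  (forall k, I (E k)) /\ (forall k, E k `<=` E k.+1).

(* |X| < |E|  (i.e. not |E| <= |X|: no injection of E into X). *)
Definition card_lt (X T : Type) (E : set T) : Prop :=
  ~ exists g : T -> X, forall a b, E a -> E b -> g a = g b -> a = b.

(* |X| < min {|E| : S E}  (with min of empty = infinity). *)
Definition card_lt_min (X T : Type) (S : set (set T)) : Prop :=
  forall E, S E -> card_lt X E.

Definition bs_family (I J K : set (set nat)) (E : set (nat -> set nat)) : Prop :=
  E `<=` Phat K /\
  forall A, Ppart J A -> exists2 Ev, E Ev &
    ~ I (\bigcup_n (A n.+1 `&` [set x | exists i, (i <= n)%N /\ Ev i x])).

Definition bsigma_family (I J : set (set nat)) (E : set (nat -> set nat)) : Prop :=
  E `<=` Mseq I /\
  forall A, Mseq J A -> exists2 Ev, E Ev &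
    infinite_set [set n | ~ (Ev n `<=` A n)].

Definition addw_family (I J : set (set nat)) (F : set (set nat)) : Prop :=
  F `<=` I /\
  forall B : nat -> set nat, (forall n, J (B n)) ->
    exists2 A, F A & forall n, ~ (A `<=` B n).

Definition lt_bs (X : Type) (I J K : set (set nat)) := card_lt_min X (bs_family I J K).
Definition lt_bsigma (X : Type) (I J : set (set nat)) := card_lt_min X (bsigma_family I J).
Definition lt_addw (X : Type) (I J : set (set nat)) := card_lt_min X (addw_family I J).

From mathcomp Require Import all_boot all_order all_algebra.
From mathcomp Require Import all_classical all_reals topology normedtype numfun.
From mathcomp Require Import finmap.
Import numFieldNormedType.Exports.
Import Order.TTheory GRing.Theory Num.Theory.
Local Open Scope classical_set_scope.
Local Open Scope ring_scope.

(* Below the relevant cardinal an X-indexed family of sets is never a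
   witnessing family, so the sets witnessing the convergence at the single
   points x are dominated simultaneously by one partition, increasing sequence
   or countable family in the target ideal.  For (1) the witness of x is the
   partition of the support of (f n x)_n into the I-small bands
   1/(i+2) <= |f n x| < 1/(i+1), and the block index k of n yields the
   quasi-normal control 1/(k+1); for (2) and (3) the points dominated from
   stage m on form the pieces X_m of a sigma-uniform decomposition.  The
   inclusions of ideals follow by testing on the indicator sequences, constant
   in x, of members of the smaller ideal. *)

Section Ideals.
Context {I : set (set nat)} (hI : is_ideal I).

Lemma idealU {A B} : I A -> I B -> I (A `|` B).
Proof. by case: hI => + _ _ _; apply. Qed.

Lemma idealS {A B} : I A -> B `<=` A -> I B.
Proof. by case: hI => _ sub _ _ IA BA; apply: sub BA IA. Qed.

Lemma ideal_finite A : finite_set A -> I A.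
Proof. by case: hI => _ _ + _; apply. Qed.

Lemma ideal_bigcup_lt {A : nat -> set nat} :
  (forall k, I (A k)) -> forall N, I (\bigcup_(k in `I_N) A k).
Proof.
move=> IA; elim => [|N IH]; first by apply: (idealS (IA 0%N)) => m [].
apply: (idealS (idealU (IA N) IH)) => m [k /= kN Akm].
by move: kN; rewrite ltnS leq_eqVlt => /predU1P[<-|kN]; [left | right; exists k].
Qed.

End Ideals.

Lemma finite_nat_ub {A : set nat} : finite_set A -> exists m, forall k, A k -> (k < m)%N.
Proof.
move=> /finite_fsetP[B ->]; exists (\max_(i <- B) i).+1 => k /= kB.
by rewrite ltnS; apply: leq_bigmax_seq.
Qed.

Section Reciprocals.
Context {R : realType}.

Lemma inv_succ_gt0 n : 0 < (n.+1%:R : R)^-1.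
Proof. by rewrite invr_gt0 ltr0Sn. Qed.

Lemma inv_succ_le {m n} : (m <= n)%N -> (n.+1%:R : R)^-1 <= (m.+1%:R)^-1.
Proof. by move=> mn; rewrite lef_pV2 ?posrE ?ltr0Sn // ler_nat ltnS. Qed.

Lemma inv_succ_lt {eps : R} {n} : 0 < eps ->
  (Num.truncn eps^-1 <= n)%N -> (n.+1%:R)^-1 < eps.
Proof.
move=> eps_gt0 le_n; rewrite -[ltRHS]invrK ltf_pV2 ?posrE ?invr_gt0 ?ltr0Sn //.
by apply: lt_le_trans (truncnS_gt _) _; rewrite ler_nat ltnS.
Qed.

Lemma Iconv0_inv_succ_comp (I : set (set nat)) (kap : nat -> nat) :
  is_ideal I -> (forall k, I [set n | kap n = k]) ->
  Iconv0 I (fun n => ((kap n).+1%:R : R)^-1).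
Proof.
move=> hI Ikap eps eps_gt0.
apply: (idealS hI (ideal_bigcup_lt hI Ikap (Num.truncn eps^-1))) => n /=.
rewrite gtr0_norm ?inv_succ_gt0 // => le_eps; exists (kap n) => //=.
by rewrite ltnNge; apply/negP => /(inv_succ_lt eps_gt0); rewrite ltNge le_eps.
Qed.

Lemma Iconv0_inv_succ (I : set (set nat)) :
  is_ideal I -> Iconv0 I (fun n => (n.+1%:R : R)^-1).
Proof.
move=> hI; apply: Iconv0_inv_succ_comp => // k; apply: (ideal_finite hI).
by apply: (sub_finite_set _ (finite_II k.+1)) => n /= ->.
Qed.

Definition band (a : nat -> R) (i : nat) : set nat :=
  [set n | (i.+2%:R)^-1 <= `|a n| /\ (i = 0%N \/ `|a n| < (i.+1%:R)^-1)].

Lemma band_disjoint a i j : i <> j -> band a i `&` band a j = set0.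
Proof.
have band_lt k l n : (k < l)%N -> band a k n -> band a l n -> False.
  move=> kl [ge_k _] [_ [l0|lt_l]]; first by rewrite l0 in kl.
  by have := le_lt_trans ge_k (lt_le_trans lt_l (inv_succ_le kl)); rewrite ltxx.
move=> neq_ij; apply/seteqP; split => // n [bi bj].
case: (ltngtP i j) => [ij|ij|eq_ij]; [exact: band_lt ij bi bj | exact: band_lt ij bj bi |].
exact: neq_ij eq_ij.
Qed.

Lemma band_cover {a n N} : (N.+2%:R)^-1 <= `|a n| -> exists2 i, (i <= N)%N & band a i n.
Proof.
elim: N => [|N IH] ge_N; first by exists 0%N => //; split => //; left.
have [lt_N|ge_N1] := ltP `|a n| (N.+2%:R)^-1; first by exists N.+1 => //; split => //; right.
by have [i iN bi] := IH ge_N1; exists i => //; apply: leqW.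
Qed.

Lemma band_Phat {I : set (set nat)} {a} : is_ideal I -> Iconv0 I a -> Phat I (band a).
Proof.
move=> hI Ia; split; last by move=> i j; apply: band_disjoint.
by move=> i; apply: (idealS hI (Ia _ (inv_succ_gt0 i.+1))) => n [].
Qed.

End Reciprocals.

Section CardinalBounds.
Context {X : choiceType} (x0 : X).

Lemma card_lt_min_range {T} {S : set (set T)} (phi : X -> T) :
  card_lt_min X S -> ~ S (range phi).
Proof.
move=> ltX Sphi; apply: (ltX _ Sphi); exists (fun t => xget x0 [set x | phi x = t]).
move=> _ _ [a _ <-] [b _ <-] eq_xget.
have xgetK c : phi (xget x0 [set x | phi x = phi c]) = phi c.
  by apply: (xgetPex x0 (P := [set x | phi x = phi c])); exists c.
by rewrite -xgetK eq_xget xgetK.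
Qed.

Lemma lt_bs_dominate {I J K : set (set nat)} (phi : X -> nat -> set nat) :
  lt_bs X I J K -> (forall x, Phat K (phi x)) ->
  exists2 A, Ppart J A &
    forall x, I (\bigcup_n (A n.+1 `&` [set m | exists i, (i <= n)%N /\ phi x i m])).
Proof.
move=> /(card_lt_min_range phi)/not_andP[not_family phi_in|].
  by exfalso; apply: not_family => _ [x _ <-]; apply: phi_in.
move=> /existsNP[A /not_implyP[PA notdom]]; exists A => // x.
by apply: contrapT => notI; apply: notdom; exists (phi x) => //; exists x.
Qed.

Lemma lt_bsigma_dominate {I K : set (set nat)} (phi : X -> nat -> set nat) :
  lt_bsigma X I K -> (forall x, Mseq I (phi x)) ->
  exists2 B, Mseq K B & forall x, finite_set [set n | ~ (phi x n `<=` B n)].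
Proof.
move=> /(card_lt_min_range phi)/not_andP[not_family phi_in|].
  by exfalso; apply: not_family => _ [x _ <-]; apply: phi_in.
move=> /existsNP[B /not_implyP[MB notdom]]; exists B => // x.
by apply: contrapT => inf; apply: notdom; exists (phi x) => //; exists x.
Qed.

Lemma lt_addw_dominate {J K : set (set nat)} (phi : X -> set nat) :
  lt_addw X J K -> (forall x, J (phi x)) ->
  exists2 B : nat -> set nat, (forall n, K (B n)) & forall x, exists n, phi x `<=` B n.
Proof.
move=> /(card_lt_min_range phi)/not_andP[not_family phi_in|].
  by exfalso; apply: not_family => _ [x _ <-]; apply: phi_in.
move=> /existsNP[B /not_implyP[KB notdom]]; exists B => // x.
apply: contrapT => /forallNP nsub; apply: notdom.
by exists (phi x) => //; exists x.
Qed.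

Lemma lt_addw_sub {J K : set (set nat)} : is_ideal K -> lt_addw X J K -> J `<=` K.
Proof.
move=> hK ltX A JA.
have [B KB /(_ x0)[n AB]] := lt_addw_dominate (fun _ : X => A) ltX (fun _ => JA).
exact: (idealS hK (KB n) AB).
Qed.

End CardinalBounds.

Section Indicators.
Context {R : realType} {X : Type} {A : set nat}.

Lemma indic_norm_ge (eps : R) n : 0 < eps -> eps <= `|\1_A n : R| -> A n.
Proof.
rewrite indicE; case: (boolP (n \in A)) => [/set_mem // | _] eps_gt0.
by rewrite normr0 leNgt eps_gt0.
Qed.

Lemma indic_norm_mem n : A n -> `|\1_A n : R| = 1.
Proof. by move=> /mem_set An; rewrite indicE An normr1. Qed.

Lemma Ipointwise_indic {I} : is_ideal I -> I A ->
  Ipointwise I (fun n (_ : X) => \1_A n : R).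
Proof.
by move=> hI IA x eps eps_gt0; apply: (idealS hI IA) => n /=; apply: indic_norm_ge.
Qed.

Lemma Iquasi_normal_indic {J} : is_ideal J -> J A ->
  Iquasi_normal J (fun n (_ : X) => \1_A n : R).
Proof.
move=> hJ JA; exists (fun n => (n.+1%:R)^-1); split.
- exact: inv_succ_gt0.
- exact: Iconv0_inv_succ.
- by move=> x; apply: (idealS hJ JA) => n /=; apply: indic_norm_ge; apply: inv_succ_gt0.
Qed.

Lemma ideal_of_Iquasi_normal_indic (x0 : X) {J} : is_ideal J ->
  Iquasi_normal J (fun n (_ : X) => \1_A n : R) -> J A.
Proof.
move=> hJ [e [e_gt0 e_conv e_dom]].
apply: (idealS hJ (idealU hJ (e_dom x0) (e_conv 1 ltr01))) => n An /=.
rewrite indic_norm_mem // gtr0_norm //.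
by case: (leP (e n) 1) => [le1|/ltW]; [left | right].
Qed.

Lemma ideal_of_Isigma_uniform_indic (x0 : X) {K} : is_ideal K ->
  Isigma_uniform K (fun n (_ : X) => \1_A n : R) -> K A.
Proof.
move=> hK [Xk [cover unif]].
have [k _ Xk_x0] : (\bigcup_k Xk k) x0 by rewrite cover.
apply: (idealS hK (unif k 1 ltr01)) => n An.
by exists x0; rewrite indic_norm_mem.
Qed.

End Indicators.

Section Implications.
Context {R : realType} {X : choiceType} (x0 : X) {I J K : set (set nat)}.
Hypotheses (hI : is_ideal I) (hJ : is_ideal J) (hK : is_ideal K).
Context {f : nat -> X -> R}.

Lemma Iquasi_normal_of_Ipointwise :
  lt_bs X J J I -> Ipointwise I f -> Iquasi_normal J f.
Proof.
move=> ltX pw.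
have [A [[AJ _] Acover] dom] :=
  lt_bs_dominate x0 (fun x => band (f^~ x)) ltX (fun x => band_Phat hI (pw x)).
have /choice[kap kapA] : forall m, exists k, A k m.
  move=> m; have : (\bigcup_k A k) m by rewrite Acover.
  by case=> k _; exists k.
exists (fun m => ((kap m).+1%:R)^-1); split.
- by move=> m; apply: inv_succ_gt0.
- by apply: Iconv0_inv_succ_comp => // k; apply: (idealS hJ (AJ k)) => m <-.
move=> x; apply: (idealS hJ (idealU hJ (AJ 0%N) (dom x))) => m /=.
move: (kapA m); case: (kap m) => [A0m _ | n Am le_f]; first by left.
have [i iN band_i] := band_cover (a := f^~ x) le_f.
by right; exists n => //; split => //; exists i.
Qed.

Lemma Isigma_uniform_of_Iquasi_normal :
  lt_addw X J K -> Iquasi_normal J f -> Isigma_uniform K f.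
Proof.
move=> ltX [e [e_gt0 e_conv e_dom]].
have [B KB dom] := lt_addw_dominate x0 (fun x => [set n | e n <= `|f n x|]) ltX e_dom.
exists (fun m => [set x | [set n | e n <= `|f n x|] `<=` B m]); split.
  by apply/seteqP; split => // x _; have [m] := dom x; exists m.
move=> m eps eps_gt0.
have JK := lt_addw_sub x0 hK ltX.
apply: (idealS hK (idealU hK (KB m) (JK _ (e_conv eps eps_gt0)))) => n [x [xm le_f]].
have [Bmn|nBmn] := pselect (B m n); [by left | right].
have lt_e : `|f n x| < e n by rewrite ltNge; apply/negP => /xm.
by rewrite /= gtr0_norm // ltW // (le_lt_trans le_f lt_e).
Qed.

Lemma Isigma_uniform_of_Ipointwise :
  lt_bsigma X I K -> Ipointwise I f -> Isigma_uniform K f.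
Proof.
move=> ltX pw.
pose E x k := [set n | (k.+1%:R : R)^-1 <= `|f n x|].
have EM x : Mseq I (E x).
  split=> [k | k n]; first exact: pw _ _ (inv_succ_gt0 k).
  by apply: le_trans; apply: inv_succ_le.
have [B [KB _] dom] := lt_bsigma_dominate x0 E ltX EM.
have stage x : exists m, forall k, (m <= k)%N -> E x k `<=` B k.
  have [m mP] := finite_nat_ub (dom x); exists m => k mk.
  by apply: contrapT => /mP; rewrite ltnNge mk.
exists (fun m => [set x | forall k, (m <= k)%N -> E x k `<=` B k]); split.
  by apply/seteqP; split => // x _; have [m] := stage x; exists m.
move=> m eps eps_gt0; pose k := maxn m (Num.truncn eps^-1).
apply: (idealS hK (KB k)) => n [x [xm le_f]]; apply: (xm k (leq_maxl _ _)).
by apply: le_trans le_f; apply/ltW/inv_succ_lt => //; apply: leq_maxr.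
Qed.

End Implications.

Theorem theorem4p3 (R : realType) (X : topologicalType) (x0 : X)
  (I J K : set (set nat)) (hI : is_ideal I) (hJ : is_ideal J) (hK : is_ideal K) :
  [/\
   (* (1) *)
   (lt_bs X J J I ->
      forall f : nat -> X -> R, (forall n, continuous (f n)) ->
        Ipointwise I f -> Iquasi_normal J f) /\
   ((forall f : nat -> X -> R, (forall n, continuous (f n)) ->
        Ipointwise I f -> Iquasi_normal J f) -> I `<=` J),
   (* (2) *)
   (lt_addw X J K ->
      forall f : nat -> X -> R, (forall n, continuous (f n)) ->
        Iquasi_normal J f -> Isigma_uniform K f) /\
   ((forall f : nat -> X -> R, (forall n, continuous (f n)) ->
        Iquasi_normal J f -> Isigma_uniform K f) -> J `<=` K) &
   (* (3) *)
   (lt_bsigma X I K ->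
      forall f : nat -> X -> R, (forall n, continuous (f n)) ->
        Ipointwise I f -> Isigma_uniform K f) /\
   ((forall f : nat -> X -> R, (forall n, continuous (f n)) ->
        Ipointwise I f -> Isigma_uniform K f) -> I `<=` K)].
Proof.
have indic_cont (A : set nat) n : continuous (fun _ : X => \1_A n : R).
  exact: cst_continuous.
split; split.
- by move=> ltX f _; exact: (Iquasi_normal_of_Ipointwise x0 hI hJ ltX).
- move=> H A IA; apply: (ideal_of_Iquasi_normal_indic x0 hJ).
  exact: H (indic_cont A) (Ipointwise_indic hI IA).
- by move=> ltX f _; exact: (Isigma_uniform_of_Iquasi_normal x0 hK ltX).
- move=> H A JA; apply: (ideal_of_Isigma_uniform_indic x0 hK).
  exact: H (indic_cont A) (Iquasi_normal_indic hJ JA).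
- by move=> ltX f _; exact: (Isigma_uniform_of_Ipointwise x0 hK ltX).
- move=> H A IA; apply: (ideal_of_Isigma_uniform_indic x0 hK).
  exact: H (indic_cont A) (Ipointwise_indic hI IA).
Qed.
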